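(* Let $D$ be a dataset of $N\ge1$ records over $\Omega$, let $r\subseteq[d]$, and let $\hat D$ be the dataset obtained by drawing $K\ge1$ records from $D$ uniformly at random with replacement. Let $\mu=\frac1N M_r(D)$ and $s(x)=\lceil K\mu(x)\rceil$ for $x\in\Omega_r$. Then $$\mathbb{E}\Big[\Big\|\tfrac1N M_r(D)-\tfrac1K M_r(\hat D)\Big\|_1\Big] = \frac{2}{K}\sum_{x\in\Omega_r} s(x)\binom{K}{s(x)}\mu(x)^{s(x)}(1-\mu(x))^{K-s(x)+1}$$ (with the convention $0^0=1$).
   Context: A dataset is a finite multiset of records in $\Omega=\Omega_1\times\dots\times\Omega_d$, each $\Omega_i$ finite. For $r\subseteq[d]$, $\Omega_r=\prod_{i\in r}\Omega_i$, $x_r=(x_i)_{i\in r}$, and the marginal $M_r(D)$ is the vector indexed by $t\in\Omega_r$ with $M_r(D)[t]=\sum_{x\in D}\mathbb{1}[x_r=t]$. *)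

From HB Require Import structures.
From mathcomp Require Import all_boot all_order all_algebra.
Set Implicit Arguments. Unset Strict Implicit. Unset Printing Implicit Defensive.
Import Order.TTheory GRing.Theory Num.Theory.

Definition Omega (d : nat) (Om : 'I_d -> finType) : finType :=
  {dffun forall i : 'I_d, Om i}.

Definition Omega_r (d : nat) (Om : 'I_d -> finType) (r : {set 'I_d}) : finType :=
  {dffun forall i : {i : 'I_d | i \in r}, Om (sval i)}.

Definition proj_r (d : nat) (Om : 'I_d -> finType) (r : {set 'I_d})
  (x : Omega Om) : Omega_r Om r :=
  [ffun i : {i : 'I_d | i \in r} => x (sval i)] : {dffun forall i : {i : 'I_d | i \in r}, Om (sval i)}.

(* A dataset of n records is a function 'I_n -> Omega (a multiset with
   multiplicities given by the fibres).  Marginal M_r(D)[t]. *)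
Definition marginal (d : nat) (Om : 'I_d -> finType) (r : {set 'I_d}) (n : nat)
  (D : 'I_n -> Omega Om) (t : Omega_r Om r) : nat :=
  #|[set i : 'I_n | proj_r r (D i) == t]|.
Arguments marginal {d Om} r {n} D t.
Arguments proj_r {d Om} r x.

From HB Require Import structures.
From mathcomp Require Import all_boot all_order all_algebra.
From mathcomp Require Import ring.
Set Implicit Arguments. Unset Strict Implicit. Unset Printing Implicit Defensive.
Import Order.TTheory GRing.Theory Num.Theory.
Local Open Scope ring_scope.

(* For a fixed cell t, the error |mu t - M_t(sample)/K| depends on the sample
   only through the number k of draws landing in t, and the number of index
   maps giving k is C(K,k) m^k (N-m)^(K-k): the expectation is the mean
   absolute deviation E|Kp - X|/K of a Binomial(K, p) variable X.  De Moivre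
   evaluates it: C(K,k) p^k q^(K-k) (Kp - k) = T(k+1) - T(k) for
   T(k) = k C(K,k) p^k q^(K-k+1), and Kp - k changes sign at s = ceil(Kp), so
   both halves of the sum telescope to T(s). *)
Lemma sum_set_card (T : finType) (V : nmodType) (F : nat -> V) :
  \sum_(S : {set T}) F #|S| = \sum_(k < #|T|.+1) F k *+ 'C(#|T|, k).
Proof.
pose size_ord (S : {set T}) : 'I_#|T|.+1 :=
  Ordinal (max_card (mem S) : #|S| < #|T|.+1)%N.
rewrite (partition_big size_ord xpredT) //=; apply: eq_bigr => k _.
rewrite -card_draws -sumr_const; apply: eq_big => [S|S /eqP <-] //.
by rewrite inE -val_eqE.
Qed.

Lemma card_ffun_preimset (aT rT : finType) (a : pred rT) (S : {set aT}) :
  #|[pred f : {ffun aT -> rT} | [set x | a (f x)] == S]|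
    = (#|a| ^ #|S| * #|[predC a]| ^ #|~: S|)%N.
Proof.
pose F x := if x \in S then a else [predC a].
have -> : #|[pred f : {ffun aT -> rT} | [set x | a (f x)] == S]| = #|family F|.
  apply: eq_card => f; rewrite !inE; apply/eqP/familyP => [fS x | fF].
    by rewrite /F -fS inE; case: ifP => // /negbT.
  apply/setP => x; have := fF x; rewrite /F !inE.
  by case: (x \in S) => [|/negbTE].
have -> : #|family F| = (\prod_(x : aT) #|F x|)%N.
  apply: (etrans (card_family F)).
  by rewrite foldrE big_image.
rewrite (bigID (mem S)) /= -!prod_nat_const; congr (_ * _)%N.
  by apply: eq_bigr => x xS; rewrite /F xS.
by apply: eq_big => [x|x /negbTE xS]; rewrite ?inE // /F xS.
Qed.

Lemma sum_ffun_card_preimset (aT rT : finType) (V : nmodType) (a : pred rT)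
    (G : nat -> V) :
  \sum_(f : {ffun aT -> rT}) G #|[set x | a (f x)]|
  = \sum_(k < #|aT|.+1)
      G k *+ ('C(#|aT|, k) * #|a| ^ k * #|[predC a]| ^ (#|aT| - k)).
Proof.
rewrite (partition_big (fun f : {ffun aT -> rT} => [set x | a (f x)]) xpredT) //=.
transitivity (\sum_(S : {set aT})
    G #|S| *+ (#|a| ^ #|S| * #|[predC a]| ^ (#|aT| - #|S|))).
  apply: eq_bigr => S _.
  have -> : (#|aT| - #|S| = #|~: S|)%N by rewrite -(cardsC S) addKn.
  rewrite (eq_bigr (fun=> G #|S|)) => [|f /eqP -> //].
  by rewrite sumr_const -card_ffun_preimset.
rewrite (sum_set_card aT (fun k => G k *+ (#|a| ^ k * #|[predC a]| ^ (#|aT| - k)))).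
by apply: eq_bigr => k _; rewrite -mulrnA mulnC mulnA.
Qed.

Definition binomial_mad_term (R : pzSemiRingType) (p q : R) (K k : nat) : R :=
  k%:R * 'C(K, k)%:R * p ^+ k * q ^+ (K - k + 1).

Lemma binomial_mad_term_telescope (R : comPzRingType) (p q : R) (K k : nat) :
  p + q = 1 -> (k <= K)%N ->
  'C(K, k)%:R * p ^+ k * q ^+ (K - k) * (K%:R * p - k%:R)
  = binomial_mad_term p q K k.+1 - binomial_mad_term p q K k.
Proof.
move=> /(canRL (addKr p)) -> {q}; rewrite /binomial_mad_term leq_eqVlt.
case/predU1P => [-> | ltkK].
  by rewrite subnn (bin_small (ltnSn K)) binn add0n expr1 expr0; ring.
rewrite -natrM mul_bin_left natrM natrB ?(ltnW ltkK) // -(subnSK ltkK) !addn1.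
rewrite !exprS; ring.
Qed.

Lemma binomial_mean_abs_dev (R : realDomainType) (p q : R) (K s : nat) :
  p + q = 1 -> (s <= K)%N ->
  (forall k, (s <= k)%N = (K%:R * p <= k%:R)) ->
  \sum_(k < K.+1) 'C(K, k)%:R * p ^+ k * q ^+ (K - k) * `|K%:R * p - k%:R|
  = 2 * binomial_mad_term p q K s.
Proof.
move=> pq sK hs; set T := binomial_mad_term p q K.
rewrite -(big_mkord xpredT (fun k =>
  'C(K, k)%:R * p ^+ k * q ^+ (K - k) * `|K%:R * p - k%:R|)).
rewrite (big_cat_nat (n := s)) ?leq0n ?(leq_trans sK) //=.
rewrite (telescope_sumr_eq T _ (leq0n s)) => [|k /andP[_ lt_ks]]; last first.
  rewrite -binomial_mad_term_telescope ?(leq_trans (ltnW lt_ks)) //.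
  by rewrite ger0_norm // subr_ge0 ltW // ltNge -hs -ltnNge.
rewrite (telescope_sumr_eq (fun k => - T k) _ (leqW sK)) => [|k /andP[le_sk lt_kK]].
  have T0 : T 0%N = 0 by rewrite /T /binomial_mad_term !mul0r.
  have TK : T K.+1 = 0 by rewrite /T /binomial_mad_term bin_small // mulr0 !mul0r.
  by rewrite T0 TK; ring.
rewrite /= -opprD -binomial_mad_term_telescope // ler0_norm ?mulrN //.
by rewrite subr_le0 -hs.
Qed.

Lemma absz_ceil_le_nat (R : archiRealDomainType) (x : R) (k : nat) :
  0 <= x -> (`|Num.ceil x|%N <= k)%N = (x <= k%:R).
Proof.
move=> x_ge0; have ceil_x_ge0 : 0 <= Num.ceil x.
  by rewrite ceil_ge0 (lt_le_trans (ltrN10 R) x_ge0).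
by rewrite -lez_nat gez0_abs // ceil_le_int.
Qed.

Lemma mean_abs_sample_freq_error (R : archiRealFieldType) (N K : nat)
    (a : pred 'I_N) :
  (0 < N)%N -> (0 < K)%N ->
  let p := #|a|%:R / N%:R : R in
  (N%:R ^+ K)^-1 *
    \sum_(f : {ffun 'I_K -> 'I_N}) `|p - #|[set j | a (f j)]|%:R / K%:R|
  = 2 / K%:R * binomial_mad_term p (1 - p) K `|Num.ceil (K%:R * p)|%N.
Proof.
move=> N_gt0 K_gt0 p.
have N_neq0 : N%:R != 0 :> R by rewrite pnatr_eq0 -lt0n.
have K_neq0 : K%:R != 0 :> R by rewrite pnatr_eq0 -lt0n.
have p_ge0 : 0 <= p by rewrite divr_ge0.
have p_le1 : p <= 1.
  by rewrite ler_pdivrMr ?ltr0n // mul1r ler_nat (leq_trans (max_card _)) ?card_ord.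
have card_aE : #|a|%:R = p * N%:R by rewrite divfK.
have card_CaE : #|[predC a]|%:R = (1 - p) * N%:R.
  by apply: (addrI #|a|%:R); rewrite -natrD cardC card_ord card_aE; ring.
clearbody p.
have termE (k : nat) : (k <= K)%N ->
    `|p - k%:R / K%:R| *+ ('C(K, k) * #|a| ^ k * #|[predC a]| ^ (K - k))
    = N%:R ^+ K / K%:R *
      ('C(K, k)%:R * p ^+ k * (1 - p) ^+ (K - k) * `|K%:R * p - k%:R|).
  move=> le_kK; rewrite -(mulr_natl `|_|) !natrM !natrX card_aE card_CaE.
  have -> : p - k%:R / K%:R = (K%:R * p - k%:R) / K%:R by field.
  have -> : N%:R ^+ K = N%:R ^+ k * N%:R ^+ (K - k) :> R.
    by rewrite -exprD subnKC.
  by rewrite normrM normfV (ger0_norm (ler0n _ K)) !exprMn; field.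
rewrite (sum_ffun_card_preimset 'I_K a (fun k => `|p - k%:R / K%:R|)) card_ord.
under eq_bigr => k _ do rewrite termE ?leq_ord //.
rewrite -mulr_sumr (binomial_mean_abs_dev (s := `|Num.ceil (K%:R * p)|%N)) //.
- by field; rewrite K_neq0 expf_neq0.
- by rewrite addrC subrK.
- by rewrite absz_ceil_le_nat ?mulr_ge0 // ler_piMr.
- by move=> k; rewrite absz_ceil_le_nat ?mulr_ge0.
Qed.

Theorem mainTheorem10 (R : archiRealFieldType) (d : nat) (Om : 'I_d -> finType)
  (r : {set 'I_d}) (N K : nat) (D : 'I_N -> Omega Om) :
  (0 < N)%N -> (0 < K)%N ->
  let mu := fun t : Omega_r Om r => (marginal r D t)%:R / N%:R : R in
  let s := fun t : Omega_r Om r => `|Num.ceil (K%:R * mu t)|%N in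
  (N%:R ^+ K)^-1 *
    \sum_(f : {ffun 'I_K -> 'I_N})
       \sum_(t : Omega_r Om r)
          `| (marginal r D t)%:R / N%:R
             - (marginal r (fun j => D (f j)) t)%:R / K%:R |
  = 2 / K%:R *
    \sum_(t : Omega_r Om r)
       (s t)%:R * ('C(K, s t))%:R * mu t ^+ s t * (1 - mu t) ^+ (K - s t + 1).
Proof.
move=> N_gt0 K_gt0 mu s.
rewrite exchange_big mulr_sumr [RHS]mulr_sumr; apply: eq_bigr => t _.
pose a i := proj_r r (D i) == t.
have marginal_DE : marginal r D t = #|a| by apply: eq_card => i; rewrite inE.
rewrite /s /mu marginal_DE.
exact: mean_abs_sample_freq_error.
Qed.
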